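(* Consider a pullback square in $\mathsf{PreOrdGrp}$ $(p_2,\bar p_2)\colon(P,P_P)\to(G,P_G)$, $(p_1,\bar p_1)\colon(P,P_P)\to(E,P_E)$, $(f,\bar f)\colon(G,P_G)\to(H,P_H)$, $(p,\bar p)\colon(E,P_E)\to(H,P_H)$, with $(f,\bar f)\circ(p_2,\bar p_2)=(p,\bar p)\circ(p_1,\bar p_1)$, in which all four arrows are regular epimorphisms. Then: (1) if Condition $(\star)$ holds for $(f,\bar f)$, then it holds for $(p_1,\bar p_1)$; (2) if $(p,\bar p)=(f,\bar f)$ (so that the square is the kernel pair of $(f,\bar f)$), then Condition $(\star)$ holds for $(p_1,\bar p_1)$ if and only if it holds for $(f,\bar f)$.
   Context: A preordered group is a pair $(G,P_G)$ with $G$ an additively written group and $P_G\subseteq G$ a submonoid closed under conjugation; morphisms are group homomorphisms $f$ with $f(P_G)\subseteq P_H$, $\bar f$ denoting the restriction to positive cones. This is $\mathsf{PreOrdGrp}$. Pullbacks are computed componentwise: $P=E\times_H G$ and $P_P=P_E\times_{P_H}P_G$. Regular epimorphisms are the morphisms with $f$ and $\bar f$ surjective. For a group $G$, $\eta_G\colon G\to G/[G,G]$ is the abelianization quotient. A morphism $(f,\bar f)\colon(G,P_G)\to(H,P_H)$ satisfies Condition $(\star)$ if for all $a,b,c\in P_G$ with $\eta_G(a)=\eta_G(b)$ and $f(b)=f(c)$, one has $a-b+c\in P_G$. *)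

Set Implicit Arguments.

Record preOrdGrp := PreOrdGrp {
  carrier :> Type;
  add : carrier -> carrier -> carrier;
  zero : carrier;
  opp : carrier -> carrier;
  addA : forall x y z, add x (add y z) = add (add x y) z;
  add0g : forall x, add zero x = x;
  addg0 : forall x, add x zero = x;
  addNg : forall x, add (opp x) x = zero;
  addgN : forall x, add x (opp x) = zero;
  pos : carrier -> Prop;
  pos0 : pos zero;
  posD : forall x y, pos x -> pos y -> pos (add x y);
  posJ : forall g x, pos x -> pos (add (add g x) (opp g))
}.

Arguments add {p}.
Arguments zero {p}.
Arguments opp {p}.
Arguments pos {p}.

Definition sub {G : preOrdGrp} (x y : G) : G := add x (opp y).

Record hom (G H : preOrdGrp) := Hom {
  hfun :> G -> H;
  hom_add : forall x y, hfun (add x y) = add (hfun x) (hfun y);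
  hom_pos : forall x, pos x -> pos (hfun x)
}.

Definition regular_epi {G H : preOrdGrp} (f : hom G H) : Prop :=
  (forall y : H, exists x : G, f x = y) /\
  (forall y : H, pos y -> exists x : G, pos x /\ f x = y).

Definition commg {G : preOrdGrp} (a b : G) : G :=
  add (add (add (opp a) (opp b)) a) b.

Inductive in_derived (G : preOrdGrp) : G -> Prop :=
  | der_comm : forall a b, in_derived G (commg a b)
  | der_zero : in_derived G zero
  | der_add : forall x y, in_derived G x -> in_derived G y -> in_derived G (add x y)
  | der_opp : forall x, in_derived G x -> in_derived G (opp x).

(** eta_G a = eta_G b for the abelianization quotient eta_G : G -> G/[G,G],
    i.e. a and b lie in the same coset of [G,G]. *)
Definition eta_eq {G : preOrdGrp} (a b : G) : Prop := in_derived G (sub a b).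

Definition cond_star {G H : preOrdGrp} (f : hom G H) : Prop :=
  forall a b c : G, pos a -> pos b -> pos c ->
    eta_eq a b -> f b = f c -> pos (add (sub a b) c).

(** The commutative square f o p2 = p o p1 is a pullback in PreOrdGrp, i.e.
    the induced map P -> E x_H G is an isomorphism of preordered groups,
    where the pullback is computed componentwise (underlying groups and
    positive cones). *)
Definition is_pullback {P E G H : preOrdGrp}
  (p1 : hom P E) (p2 : hom P G) (p : hom E H) (f : hom G H) : Prop :=
  (forall x : P, f (p2 x) = p (p1 x)) /\
  (forall x y : P, p1 x = p1 y -> p2 x = p2 y -> x = y) /\
  (forall (e : E) (g : G), p e = f g -> exists x : P, p1 x = e /\ p2 x = g) /\
  (forall x : P, pos (p1 x) -> pos (p2 x) -> pos x).


Set Implicit Arguments.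

(* An element of a pullback is positive as soon as both of its components are.
   (1) For a triple with p1 b = p1 c, the E-component of a - b + c collapses to
   p1 a, while its G-component is a - b + c for the triple (p2 a, p2 b, p2 c),
   to which (star) for f applies because f p2 = p p1.
   (2) In the kernel pair of f the diagonal g |-> (g, g) lifts positive elements
   and the derived subgroup, so a triple (a, b, c) for f lifts to the triple
   ((a, a), (b, b), (b, c)) for p1, whose output has second component a - b + c. *)

Section GroupFacts.
Variable G : preOrdGrp.

Lemma addg_lcancel (x y z : G) : add x y = add x z -> y = z.
Proof.
  intro e.
  rewrite <- (add0g G y), <- (add0g G z), <- (addNg G x), <- !addA, e.
  reflexivity.
Qed.

Lemma opp_unique (x y : G) : add y x = zero -> y = opp x.
Proof.
  intro e. rewrite <- (addg0 G y), <- (addgN G x), addA, e, add0g. reflexivity.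
Qed.

Lemma subgK (x y : G) : add (sub x y) y = x.
Proof. unfold sub. rewrite <- addA, addNg, addg0. reflexivity. Qed.

End GroupFacts.

Section Morphisms.
Variables G H : preOrdGrp.
Variable f : hom G H.

Lemma hom0 : f zero = zero.
Proof.
  apply (@addg_lcancel H (f zero)).
  rewrite <- hom_add, add0g, addg0. reflexivity.
Qed.

Lemma homN (x : G) : f (opp x) = opp (f x).
Proof. apply opp_unique. rewrite <- hom_add, addNg. exact hom0. Qed.

Lemma homB (x y : G) : f (sub x y) = sub (f x) (f y).
Proof. unfold sub. rewrite hom_add, homN. reflexivity. Qed.

Lemma hom_commg (x y : G) : f (commg x y) = commg (f x) (f y).
Proof. unfold commg. rewrite !hom_add, !homN. reflexivity. Qed.

Lemma hom_derived (x : G) : in_derived G x -> in_derived H (f x).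
Proof.
  induction 1.
  - rewrite hom_commg. apply der_comm.
  - rewrite hom0. apply der_zero.
  - rewrite hom_add. apply der_add; assumption.
  - rewrite homN. apply der_opp; assumption.
Qed.

Lemma hom_eta_eq (a b : G) : eta_eq a b -> eta_eq (f a) (f b).
Proof. unfold eta_eq. rewrite <- homB. apply hom_derived. Qed.

End Morphisms.

Lemma cond_star_pullback (P E G H : preOrdGrp)
    (p1 : hom P E) (p2 : hom P G) (p : hom E H) (f : hom G H) :
  is_pullback p1 p2 p f -> cond_star f -> cond_star p1.
Proof.
  intros (comm & _ & _ & pos_lift) star_f a b c pa pb pc eab e.
  apply pos_lift.
  - rewrite hom_add, homB, <- e, subgK. apply hom_pos, pa.
  - rewrite hom_add, homB.
    apply star_f; try (apply hom_pos; assumption).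
    + apply hom_eta_eq, eab.
    + rewrite !comm, e. reflexivity.
Qed.

Section KernelPair.
Variables P G H : preOrdGrp.
Variables (p1 p2 : hom P G) (f : hom G H).
Hypothesis kp : is_pullback p1 p2 f f.

Lemma kernel_pair_diag (g : G) : exists x : P, p1 x = g /\ p2 x = g.
Proof. destruct kp as (_ & _ & lift & _). exact (lift g g eq_refl). Qed.

Lemma kernel_pair_diag_derived (w : G) :
  in_derived G w -> exists u : P, in_derived P u /\ p1 u = w /\ p2 u = w.
Proof.
  induction 1 as [a b | | v w _ [u [du [e1 e2]]] _ [u' [du' [e1' e2']]]
                 | w _ [u [du [e1 e2]]]].
  - destruct (kernel_pair_diag a) as [x [ex1 ex2]].
    destruct (kernel_pair_diag b) as [y [ey1 ey2]].
    exists (commg x y). split; [apply der_comm |].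
    rewrite !hom_commg, ex1, ex2, ey1, ey2. split; reflexivity.
  - exists zero. split; [apply der_zero |]. rewrite !hom0. split; reflexivity.
  - exists (add u u'). split; [apply der_add; assumption |].
    rewrite !hom_add, e1, e2, e1', e2'. split; reflexivity.
  - exists (opp u). split; [apply der_opp, du |].
    rewrite !homN, e1, e2. split; reflexivity.
Qed.

Lemma kernel_pair_diag_eta_eq (x y : P) :
  p1 x = p2 x -> p1 y = p2 y -> eta_eq (p1 x) (p1 y) -> eta_eq x y.
Proof.
  intros dx dy exy.
  destruct kp as (_ & inj & _ & _).
  destruct (kernel_pair_diag_derived exy) as [u [du [e1 e2]]].
  unfold eta_eq. replace (sub x y) with u; [exact du |].
  apply inj; rewrite homB; congruence.
Qed.

Lemma cond_star_kernel_pair : cond_star p1 -> cond_star f.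
Proof.
  intros star_p1 a b c pa pb pc eab e.
  destruct kp as (_ & _ & lift & pos_lift).
  destruct (kernel_pair_diag a) as [x [ex1 ex2]].
  destruct (kernel_pair_diag b) as [y [ey1 ey2]].
  destruct (lift b c e) as [z [ez1 ez2]].
  assert (pos_xyz : pos (add (sub x y) z)).
  { apply star_p1.
    - apply pos_lift; rewrite ?ex1, ?ex2; exact pa.
    - apply pos_lift; rewrite ?ey1, ?ey2; exact pb.
    - apply pos_lift; rewrite ?ez1, ?ez2; assumption.
    - apply kernel_pair_diag_eta_eq; congruence.
    - congruence. }
  apply (hom_pos p2) in pos_xyz.
  rewrite hom_add, homB, ex2, ey2, ez2 in pos_xyz. exact pos_xyz.
Qed.

End KernelPair.

Theorem lemma2p7 :
  (forall (P E G H : preOrdGrp) (p1 : hom P E) (p2 : hom P G)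
          (p : hom E H) (f : hom G H),
      is_pullback p1 p2 p f ->
      regular_epi p1 -> regular_epi p2 -> regular_epi p -> regular_epi f ->
      cond_star f -> cond_star p1) /\
  (forall (P G H : preOrdGrp) (p1 : hom P G) (p2 : hom P G) (f : hom G H),
      is_pullback p1 p2 f f ->
      regular_epi p1 -> regular_epi p2 -> regular_epi f ->
      (cond_star p1 <-> cond_star f)).
Proof.
  split.
  - intros P E G H p1 p2 p f pb _ _ _ _. exact (cond_star_pullback pb).
  - intros P G H p1 p2 f kp _ _ _. split.
    + exact (cond_star_kernel_pair kp).
    + exact (cond_star_pullback kp).
Qed.
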